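(* Let $V$ be a finite nonempty set, $\hat x$ a maximally specific partial function on $P_V$, and $\sigma\colon X_V[\hat x]\to X_V$. Let $P_{01}[\sigma]=\{e\in P_V\mid \exists x\in X_V[\hat x]: x_e=0\wedge \sigma(x)_e=1\}$ and $P_{10}[\sigma]=\{e\in P_V\mid \exists x\in X_V[\hat x]: x_e=1\wedge \sigma(x)_e=0\}$. If there exist sets $P'_{01}\supseteq P_{01}[\sigma]$ and $P'_{10}\supseteq P_{10}[\sigma]$ with $P'_{10}\cap\hat x^{-1}(1)=\emptyset$ and $P'_{01}\cap\hat x^{-1}(0)=\emptyset$, then $\sigma(X_V[\hat x])\subseteq X_V[\hat x]$.
   Context: $P_V=\{pq\in V^2\mid p\neq q\}$; $X_V$ is the set of $x\in\{0,1\}^{P_V}$ with $x_{pq}+x_{qr}-x_{pr}\le 1$ for all pairwise distinct $p,q,r\in V$. A partial function $\tilde x$ is a map from $\operatorname{dom}(\tilde x)\subseteq P_V$ to $\{0,1\}$, $\tilde x^{-1}(b)$ the pairs mapped to $b$, and $X_V[\tilde x]=\{x\in X_V\mid x_{pq}=\tilde x_{pq}\ \forall pq\in\operatorname{dom}(\tilde x)\}$. A pair $pq$ is decided if $x_{pq}=x'_{pq}$ for all $x,x'\in X_V[\tilde x]$; $\tilde x$ is maximally specific if $X_V[\tilde x]\ne\emptyset$ and the decided pairs are exactly $\operatorname{dom}(\tilde x)$. *)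

From mathcomp Require Import all_boot all_order all_algebra.
Set Implicit Arguments. Unset Strict Implicit. Unset Printing Implicit Defensive.
Import Order.TTheory GRing.Theory Num.Theory.

Section Defs.
Variable T : finType.

Definition PV := {e : T * T | e.1 != e.2}.

Definition labeling := {ffun PV -> bool}.

(* value of x at the pair pq (false off P_V, never used there) *)
Definition xat (x : labeling) (p q : T) : bool :=
  match insub (p, q) with Some e => x e | None => false end.

Definition in_XV (x : labeling) : Prop :=
  forall p q r : T, p != q -> q != r -> p != r ->
    ((xat x p q)%:Z + (xat x q r)%:Z - (xat x p r)%:Z <= 1)%R.

Definition pfun := {ffun PV -> option bool}.

Definition in_dom (xt : pfun) (e : PV) : Prop := xt e <> None.

Definition in_XVr (xt : pfun) (x : labeling) : Prop :=
  in_XV x /\ forall e : PV, forall b : bool, xt e = Some b -> x e = b.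

Definition decided (xt : pfun) (e : PV) : Prop :=
  forall x x' : labeling, in_XVr xt x -> in_XVr xt x' -> x e = x' e.

Definition max_specific (xt : pfun) : Prop :=
  (exists x, in_XVr xt x) /\ forall e : PV, decided xt e <-> in_dom xt e.

Definition P01 (xt : pfun) (sigma : labeling -> labeling) (e : PV) : Prop :=
  exists x, in_XVr xt x /\ x e = false /\ sigma x e = true.
Definition P10 (xt : pfun) (sigma : labeling -> labeling) (e : PV) : Prop :=
  exists x, in_XVr xt x /\ x e = true /\ sigma x e = false.
End Defs.

From mathcomp Require Import all_boot all_order all_algebra.

Set Implicit Arguments.
Unset Strict Implicit.
Unset Printing Implicit Defensive.

Section FlipSets.
Variables (T : finType) (xh : pfun T) (sigma : labeling T -> labeling T).

Lemma true_pair_not_P10_stays_true x e :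
  in_XVr xh x -> xh e = Some true -> ~ P10 xh sigma e -> sigma x e = true.
Proof.
move=> hx he nP10; have xe := proj2 hx e true he.
by apply: contra_notT nP10 => /negbTE sxe; exists x.
Qed.

Lemma false_pair_not_P01_stays_false x e :
  in_XVr xh x -> xh e = Some false -> ~ P01 xh sigma e -> sigma x e = false.
Proof.
move=> hx he nP01; have xe := proj2 hx e false he.
by apply: contra_notF nP01 => sxe; exists x.
Qed.

End FlipSets.

Theorem lemma5p7 (T : finType) (hT : 0 < #|T|) (xh : pfun T)
  (sigma : labeling T -> labeling T)
  (hsig : forall x, in_XVr xh x -> in_XV (sigma x))
  (hmax : max_specific xh) :
  (exists P01' P10' : {set PV T},
     (forall e, P01 xh sigma e -> e \in P01') /\
     (forall e, P10 xh sigma e -> e \in P10') /\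
     (forall e, e \in P10' -> xh e <> Some true) /\
     (forall e, e \in P01' -> xh e <> Some false)) ->
  forall x, in_XVr xh x -> in_XVr xh (sigma x).
Proof.
move=> [P01' [P10' [sub01 [sub10 [dis10 dis01]]]]] x hx.
split=> [|e [] he]; first exact: hsig.
- by apply: (true_pair_not_P10_stays_true hx he) => /sub10 /dis10.
- by apply: (false_pair_not_P01_stays_false hx he) => /sub01 /dis01.
Qed.
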